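(* Let $V_1,\dots,V_{15}$, $w_1,\dots,w_{15}$ and the quantum permutation matrix $u$ with diagonal blocks $u^{(i)}$ be as described in the context. Let $i\neq j$, $k,s\in V_i$ and $l,t\in V_j$. (i) If $d(k,l)=d(s,t)$, then $u^{(i)}_{ks}u^{(j)}_{lt}=0$ if and only if $\langle w_i,w_j\rangle=0$. (ii) If $d(k,l)\neq d(s,t)$, then $u^{(i)}_{ks}u^{(j)}_{lt}=0$ if and only if $\langle w_i,w_j\rangle\neq0$.
   Context: The $E_8$ root system $\Psi_{E_8}\subset\mathbb{R}^8$ consists of the 240 vectors $\pm e_i\pm e_j$ ($1\le i<j\le 8$) and all $x\in\{\pm1\}^8$ with $\prod_i x_i=1$. $G_{E_8}$ is the graph with vertices $v_x$, $x\in\Psi_{E_8}$, where $v_x=v_{-x}$, and $v_x\sim v_y$ iff $\langle x,y\rangle=0$; $d(a,b)$ is graph distance in $G_{E_8}$. Let $I=\mathrm{diag}(1,1)$, $X=\begin{pmatrix}0&1\\1&0\end{pmatrix}$, $Z=\mathrm{diag}(1,-1)$, $Y=XZ$. For $M=M_1\otimes M_2\otimes M_3$ with $M_i\in\{I,X,Y,Z\}$, $\sigma_M:v_x\mapsto v_{Mx}$ is an automorphism of $G_{E_8}$ and $L=\{\sigma_M\}\cong\mathbb{Z}_2^6$. Let $V_1,\dots,V_{15}$ be the 15 orbits of $L$ on $V(G_{E_8})$ (each of size 8). For each $i$ choose $w_i\in\Psi_{E_8}$ with $v_{w_i}\in V_i$. For $x\in\Psi_{E_8}$ let $P_x=\frac{1}{\|x\|^2}xx^*\in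 M_8(\mathbb{C})$. For $v_y,v_z\in V_i$ choose $M_{yz}=M_1\otimes M_2\otimes M_3$ ($M_k\in\{I,X,Y,Z\}$) with $M_{yz}y=\pm z$, and set $u^{(i)}_{v_yv_z}=M_{yz}P_{w_i}M_{yz}^*=P_{M_{yz}w_i}$. The matrix $u$ is block diagonal with respect to $V_1,\dots,V_{15}$ with blocks $u^{(i)}=(u^{(i)}_{v_yv_z})_{v_y,v_z\in V_i}$; it is a quantum permutation matrix with entries in $M_8(\mathbb{C})$. *)

From HB Require Import structures.
From mathcomp Require Import all_boot all_order all_algebra all_field.
Set Implicit Arguments.
Unset Strict Implicit.
Unset Printing Implicit Defensive.
Import Order.TTheory GRing.Theory Num.Theory.
Local Open Scope ring_scope.

(* Every root of Psi_{E8} has all its coordinates in {-1,0,1}; we encode such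
   vectors finitely, a coordinate c : 'I_3 standing for the integer c - 1. *)
Definition vec := {ffun 'I_8 -> 'I_3}.
Definition coord (c : 'I_3) : int := (nat_of_ord c)%:Z - 1.
Definition vecZ (x : vec) : 'cV[int]_8 := \col_i coord (x i).

(* x is one of  +-e_i +- e_j (i < j): exactly the coordinates i and j are
   nonzero (and they are then +-1). *)
Definition is_root_ee (x : vec) : bool :=
  [exists i : 'I_8, exists j : 'I_8,
     (i < j)%N && [forall k : 'I_8, (coord (x k) != 0) == ((k == i) || (k == j))]].
Definition is_root_pm (x : vec) : bool :=
  [forall k : 'I_8, coord (x k) != 0] && (\prod_(k < 8) coord (x k) == 1).
Definition is_root (x : vec) : bool := is_root_ee x || is_root_pm x.

(* A vertex {x,-x} is represented by its unique member whose first nonzero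
   coordinate is positive. *)
Definition is_canon (x : vec) : bool :=
  [forall k : 'I_8,
     ([forall k' : 'I_8, (k' < k)%N ==> (coord (x k') == 0)] && (coord (x k) != 0))
       ==> (coord (x k) == 1)].
Definition vertex := {x : vec | is_root x && is_canon x}.

Definition dotZ (a b : 'cV[int]_8) : int := \sum_(i < 8) a i 0 * b i 0.

Definition adj (a b : vertex) : bool := dotZ (vecZ (val a)) (vecZ (val b)) == 0.

Definition walkb (n : nat) (a b : vertex) : bool :=
  [exists p : n.-tuple vertex, path adj a p && (last a p == b)].
(* d(a,b) = the least length of a walk from a to b (a shortest walk has length
   < #|vertex|; the value #|vertex| would stand for "infinity", but G_{E8} is
   connected). *)
Definition gdist (a b : vertex) : nat :=
  find (fun n => walkb n a b) (iota 0 #|{: vertex}|).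

Definition PI : 'M[int]_2 := 1%:M.
Definition PX : 'M[int]_2 := \matrix_(i, j) (i != j)%:R.
Definition PZ : 'M[int]_2 :=
  \matrix_(i, j) (if i == j then (if i == 0 then 1 else -1) else 0).
Definition PY : 'M[int]_2 := PX *m PZ.
Definition pauli (c : 'I_4) : 'M[int]_2 :=
  match nat_of_ord c with 0 => PI | 1 => PX | 2 => PY | _ => PZ end%N.

(* Kronecker product convention: index i < 8 corresponds to (a1,a2,a3) with
   i = 4 a1 + 2 a2 + a3, a1 the index of the first tensor factor. *)
Definition bit2 (i : 'I_8) : 'I_2 := inord (i %/ 4).
Definition bit1 (i : 'I_8) : 'I_2 := inord ((i %/ 2) %% 2).
Definition bit0 (i : 'I_8) : 'I_2 := inord (i %% 2).
Definition kron3 (A B C : 'M[int]_2) : 'M[int]_8 :=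
  \matrix_(i, j) (A (bit2 i) (bit2 j) * B (bit1 i) (bit1 j) * C (bit0 i) (bit0 j)).

Definition Lelt := ('I_4 * 'I_4 * 'I_4)%type.
Definition Lmx (m : Lelt) : 'M[int]_8 :=
  kron3 (pauli m.1.1) (pauli m.1.2) (pauli m.2).

Definition Lrel (a b : 'cV[int]_8) : bool :=
  [exists m : Lelt, (Lmx m *m a == b) || (Lmx m *m a == - b)].
Definition same_orbit (k s : vertex) : bool := Lrel (vecZ (val k)) (vecZ (val s)).

Definition Proj (a : 'cV[int]_8) : 'M[algC]_8 :=
  let aC := map_mx (fun z : int => z%:~R : algC) a in
  ((dotZ a a)%:~R)^-1 *: (aC *m (map_mx (fun z : algC => z^*) aC)^T).

(* Given the choice w (w v = the chosen representative w_i of the orbit V_i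
   containing v) and the choice Mch (Mch y z = M_{yz}), the entry
   u_{v_y v_z} = P_{M_{yz} w_i} for v_y, v_z in V_i. *)
Definition uent (w : vertex -> vec) (Mch : vertex -> vertex -> Lelt)
  (k s : vertex) : 'M[algC]_8 :=
  Proj (Lmx (Mch k s) *m vecZ (w k)).

(* Up to sign, the elements M_1 (x) M_2 (x) M_3 of L are the Weyl operators
   W(x, z) = X^x Z^z, (x, z) in F_2^3 x F_2^3; they act on Z^8 by signed
   permutations, are orthogonal, and compose and transpose up to sign, labels
   adding in F_2^6.  Since P_a P_b = 0 iff <a, b> = 0, only orthogonality
   matters, and it ignores signs.  Writing w_k = +-W_A k, w_l = +-W_B l,
   s = +-W_M k and t = +-W_N l, every inner product in the statement becomes
   <k, W_p l> up to sign, for p = A + B, M + N and A + B + M + N.  The key fact,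
   checked by computation on one root from each of the 15 orbits and
   transported along the orbits, is that for k, l in different orbits
   p |-> [<k, W_p l> = 0] + [<k, l> = 0] is a character of F_2^6.  Hence
   [<W_M w_k, W_N w_l> = 0] = [<w_k, w_l> = 0] + [<s, t> = 0] + [<k, l> = 0].
   Finally G_E8 has diameter 2 (again by computation), so for k <> l and
   s <> t, d(k, l) = d(s, t) iff [<k, l> = 0] = [<s, t> = 0]. *)

From Pilot Require Import Defs.
From HB Require Import structures.
From mathcomp Require Import all_boot all_order all_algebra all_field.
From mathcomp Require Import ring.
Import Order.TTheory GRing.Theory Num.Theory.
Local Open Scope ring_scope.


(** * Bit vectors and Weyl operators *)

Definition bits3 := (bool * bool * bool)%type.
Definition zero3 : bits3 := (false, false, false).
Definition addb3 (a b : bits3) : bits3 := (a.1.1 (+) b.1.1, a.1.2 (+) b.1.2, a.2 (+) b.2).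
Definition dotb3 (a b : bits3) : bool := (a.1.1 && b.1.1) (+) (a.1.2 && b.1.2) (+) (a.2 && b.2).

Lemma addb3A : associative addb3.
Proof. by move=> a b c; rewrite /addb3 /= !addbA. Qed.

Lemma addb30 : right_id zero3 addb3.
Proof. by case=> [[? ?] ?]; rewrite /addb3 /= !addbF. Qed.

Lemma addb3xx a : addb3 a a = zero3.
Proof. by rewrite /addb3 !addbb. Qed.

Lemma addb3K a : cancel (addb3^~ a) (addb3^~ a).
Proof. by move=> b; rewrite -addb3A addb3xx addb30. Qed.

Lemma addb3_eq a b x : (a == addb3 b x) = (b == addb3 a x).
Proof. by apply/eqP/eqP=> ->; rewrite addb3K. Qed.

Lemma addb3ACA : interchange addb3 addb3.
Proof. by move=> a b c d; rewrite /addb3 /=; congr (_, _, _); apply: addbACA. Qed.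

Lemma dotb3C : commutative dotb3.
Proof. by move=> a b; rewrite /dotb3 andbC [a.1.2 && _]andbC [a.2 && _]andbC. Qed.

Lemma dotb3Dl a b c : dotb3 (addb3 a b) c = dotb3 a c (+) dotb3 b c.
Proof.
by case: a => [[[] []] []]; case: b => [[[] []] []]; case: c => [[[] []] []].
Qed.

Lemma dotb3Dr a b c : dotb3 a (addb3 b c) = dotb3 a b (+) dotb3 a c.
Proof. by rewrite ![dotb3 a _]dotb3C dotb3Dl. Qed.

Definition bits (n : nat) : bits3 := (odd (n %/ 4), odd (n %/ 2), odd n).
Definition unbits (b : bits3) : nat := (4 * b.1.1 + 2 * b.1.2 + b.2)%N.

Lemma unbits_lt b : (unbits b < 8)%N.
Proof. by case: b => [[[] []] []]. Qed.

Lemma unbitsK : cancel unbits bits.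
Proof. by case=> [[[] []] []]. Qed.

Lemma bitsK n : (n < 8)%N -> unbits (bits n) = n.
Proof. by do 8?case: n => [//|n]. Qed.

Definition ord_of_bits (b : bits3) : 'I_8 := Ordinal (unbits_lt b).

Lemma ord_of_bitsK : cancel (fun i : 'I_8 => bits i) ord_of_bits.
Proof. by move=> i; apply: val_inj; rewrite /= bitsK. Qed.

Lemma eq_bits (i j : 'I_8) : (bits i == bits j) = (i == j).
Proof. by apply/eqP/eqP=> [/(congr1 ord_of_bits)|->//]; rewrite !ord_of_bitsK. Qed.

Lemma bits_ord_of_bits b : bits (ord_of_bits b) = b.
Proof. exact: unbitsK. Qed.

Definition label := (bits3 * bits3)%type.
Definition addl (p q : label) : label := (addb3 p.1 q.1, addb3 p.2 q.2).

Lemma addlACA : interchange addl addl.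
Proof. by move=> p q p' q'; rewrite /addl /=; congr (_, _); apply: addb3ACA. Qed.

(* [weyl (x, z)] is the Pauli operator X^x Z^z on (C^2)^(x)3, the basis vector
   e_i being indexed by the bit vector [bits i]. *)
Definition weyl (p : label) : 'M[int]_8 :=
  \matrix_(i, j) if bits j == addb3 (bits i) p.1 then (-1) ^+ dotb3 p.2 (bits j) else 0.

Definition xbit (c : 'I_4) : bool := (c == 1 :> nat) || (c == 2 :> nat).
Definition zbit (c : 'I_4) : bool := (c == 2 :> nat) || (c == 3 :> nat).
Definition plabel (m : Lelt) : label :=
  ((xbit m.1.1, xbit m.1.2, xbit m.2), (zbit m.1.1, zbit m.1.2, zbit m.2)).

Lemma pauliE c (a b : 'I_2) :
  pauli c a b = if odd b == odd a (+) xbit c then (-1) ^+ (zbit c && odd b) else 0.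
Proof.
case: c => [[|[|[|[|//]]]] ?]; rewrite /pauli /= /PI /PX /PY /PZ ?mxE;
  try rewrite !big_ord_recl big_ord0 !mxE;
  by case: a => [[|[|//]] ?]; case: b => [[|[|//]] ?].
Qed.

Lemma bits_bit (i : 'I_8) : bits i = (odd (bit2 i), odd (bit1 i), odd (bit0 i)).
Proof. by case: i => -[|[|[|[|[|[|[|[|n]]]]]]]] hi //; rewrite /bit2 /bit1 /bit0 !inordK. Qed.

Lemma Lmx_weyl m : Lmx m = weyl (plabel m).
Proof.
apply/matrixP => i j; rewrite !mxE !pauliE !bits_bit /addb3 /dotb3 /= !xpair_eqE.
by do 3!case: eqP => _; rewrite /= ?mulr0 ?mul0r // -!signr_addb.
Qed.

Lemma weyl_row_sum p (i : 'I_8) (F : 'I_8 -> int) :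
  \sum_j weyl p i j * F j =
  (-1) ^+ dotb3 p.2 (addb3 (bits i) p.1) * F (ord_of_bits (addb3 (bits i) p.1)).
Proof.
rewrite (bigD1 (ord_of_bits (addb3 (bits i) p.1))) //= big1 ?addr0 => [|j ne_j].
  by rewrite mxE bits_ord_of_bits eqxx.
rewrite mxE; case: eqP => [bj|]; last by rewrite mul0r.
by case/eqP: ne_j; rewrite -bj ord_of_bitsK.
Qed.

Lemma weyl_mul p q : weyl p *m weyl q = (-1) ^+ dotb3 p.2 q.1 *: weyl (addl p q).
Proof.
apply/matrixP => i j; rewrite !mxE weyl_row_sum !mxE bits_ord_of_bits -addb3A.
case: eqP => [->|_]; last by rewrite !mulr0.
rewrite -!signr_addb !(dotb3Dr, dotb3Dl).
by case: (dotb3 p.2 (bits i)); case: (dotb3 p.2 p.1); case: (dotb3 p.2 q.1);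
   case: (dotb3 q.2 (bits i)); case: (dotb3 q.2 p.1); case: (dotb3 q.2 q.1).
Qed.

Lemma weyl_tr p : (weyl p)^T = (-1) ^+ dotb3 p.2 p.1 *: weyl p.
Proof.
apply/matrixP => i j; rewrite !mxE addb3_eq.
case: eqP => [bi|_]; last by rewrite mulr0.
by rewrite bi -signr_addb dotb3Dr addbCA addbb addbF.
Qed.

Lemma weyl0 : weyl (zero3, zero3) = 1.
Proof.
by apply/matrixP => i j; rewrite !mxE /= addb30 eq_bits eq_sym; case: eqP.
Qed.

Lemma pauli_bits_surj x z : exists c : 'I_4, (xbit c, zbit c) = (x, z).
Proof.
by case: x; case: z; [exists (inord 2) | exists (inord 1) | exists (inord 3) | exists (inord 0)];
   rewrite /xbit /zbit inordK.
Qed.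

Lemma plabel_surj p : exists m, plabel m = p.
Proof.
case: p => [[[x1 x2] x3] [[z1 z2] z3]].
have [c1 [<- <-]] := pauli_bits_surj x1 z1.
have [c2 [<- <-]] := pauli_bits_surj x2 z2.
by have [c3 [<- <-]] := pauli_bits_surj x3 z3; exists (c1, c2, c3).
Qed.


(** * Orthogonality up to sign *)

Lemma dotZE (a b : 'cV[int]_8) : dotZ a b = (a^T *m b) 0 0.
Proof. by rewrite mxE; apply: eq_bigr => i _; rewrite mxE. Qed.

Lemma dotZ_weyl p a b : dotZ (weyl p *m a) b = (-1) ^+ dotb3 p.2 p.1 * dotZ a (weyl p *m b).
Proof. by rewrite !dotZE trmx_mul weyl_tr -scalemxAr -scalemxAl -mulmxA mxE. Qed.

Lemma dotZ_self_eq0 (a : 'cV[int]_8) : (dotZ a a == 0) = (a == 0).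
Proof.
rewrite /dotZ psumr_eq0 => [|i _]; last by rewrite -expr2 sqr_ge0.
apply/allP/eqP => [a0|-> i _]; last by rewrite mxE mul0r.
apply/matrixP => i j; rewrite (ord1 j) !mxE; apply/eqP.
by move: (a0 i (mem_index_enum i)); rewrite mulf_eq0 orbb.
Qed.

Definition orth (a b : 'cV[int]_8) : bool := dotZ a b == 0.

Lemma orth_weyl p a b : orth (weyl p *m a) b = orth a (weyl p *m b).
Proof. by rewrite /orth dotZ_weyl mulf_eq0 signr_eq0. Qed.

Definition pm_eq (a b : 'cV[int]_8) : bool := (a == b) || (a == - b).

Lemma pm_eq_refl : reflexive pm_eq.
Proof. by move=> a; rewrite /pm_eq eqxx. Qed.

Lemma pm_eq_sym : symmetric pm_eq.
Proof. by move=> a b; rewrite /pm_eq eq_sym; congr (_ || _); rewrite -eqr_oppLR eq_sym. Qed.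

Lemma pm_eq_trans : transitive pm_eq.
Proof.
move=> b a c /orP[]/eqP-> /orP[]/eqP->; rewrite /pm_eq ?opprK eqxx ?orbT //.
Qed.

Lemma pm_eq_mulmx (M : 'M[int]_8) {a b} : pm_eq a b -> pm_eq (M *m a) (M *m b).
Proof. by case/orP=> /eqP->; rewrite /pm_eq ?mulmxN eqxx ?orbT. Qed.

Lemma pm_eq_sign (e : bool) a : pm_eq ((-1) ^+ e *: a) a.
Proof. by case: e; rewrite /pm_eq ?scaleN1r ?scale1r eqxx ?orbT. Qed.

Lemma orth_pm_eql {a c} b : pm_eq a c -> orth a b = orth c b.
Proof.
by case/orP=> /eqP-> //; rewrite /orth !dotZE raddfN /= mulNmx mxE oppr_eq0.
Qed.

Lemma orth_pm_eqr a {b c} : pm_eq b c -> orth a b = orth a c.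
Proof. by case/orP=> /eqP-> //; rewrite /orth !dotZE mulmxN mxE oppr_eq0. Qed.

Lemma pm_eq_weylM p q a : pm_eq (weyl p *m (weyl q *m a)) (weyl (addl p q) *m a).
Proof. by rewrite mulmxA weyl_mul -scalemxAl pm_eq_sign. Qed.

Lemma pm_eq_weyl_mulmx p {q a b} :
  pm_eq a (weyl q *m b) -> pm_eq (weyl p *m a) (weyl (addl p q) *m b).
Proof. by move=> ab; apply: pm_eq_trans (pm_eq_mulmx _ ab) (pm_eq_weylM p q b). Qed.

Lemma pm_eq_weylV {p a b} : pm_eq (weyl p *m a) b -> pm_eq a (weyl p *m b).
Proof.
move=> pab; rewrite pm_eq_sym.
apply: (@pm_eq_trans (weyl p *m (weyl p *m a))); first by rewrite pm_eq_sym pm_eq_mulmx.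
have pp0 : addl p p = (zero3, zero3) by rewrite /addl !addb3xx.
by apply: pm_eq_trans (pm_eq_weylM p p a) _; rewrite pp0 weyl0 mul1mx pm_eq_refl.
Qed.

Lemma orth_pm_weyl {p q a b x y} :
  pm_eq x (weyl p *m a) -> pm_eq y (weyl q *m b) -> orth x y = orth a (weyl (addl p q) *m b).
Proof.
move=> xa yb; rewrite (orth_pm_eql _ xa) (orth_pm_eqr _ yb) orth_weyl.
exact: orth_pm_eqr (pm_eq_weylM p q b).
Qed.

Lemma weyl_mulmx_eq0 p (a : 'cV[int]_8) : (weyl p *m a == 0) = (a == 0).
Proof.
apply/eqP/eqP=> [pa0|->]; last by rewrite mulmx0.
by case/orP: (pm_eq_weylV (pm_eq_refl (weyl p *m a))) => /eqP->; rewrite pa0 mulmx0 ?oppr0.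
Qed.

Lemma vecZ_neq0 (x : vec) (i : 'I_8) : Defs.coord (x i) != 0 -> vecZ x != 0.
Proof. by apply: contraNneq => /matrixP/(_ i 0); rewrite !mxE => ->. Qed.

Lemma vecZ_root_neq0 x : is_root x -> vecZ x != 0.
Proof.
case/orP=> [/existsP[i /existsP[j /andP[_ /forallP/(_ i)]]] | /andP[/forallP/(_ 0) x0 _]].
  by rewrite eqxx => /eqP; apply: vecZ_neq0.
exact: vecZ_neq0 x0.
Qed.

Lemma LrelP a b : reflect (exists p, pm_eq (weyl p *m a) b) (Lrel a b).
Proof.
apply: (iffP existsP) => [[m]|[p]]; first by exists (plabel m); rewrite -Lmx_weyl.
by have [m <-] := plabel_surj p; exists m; rewrite Lmx_weyl.
Qed.

Lemma Lrel_refl : reflexive Lrel.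
Proof. by move=> a; apply/LrelP; exists (zero3, zero3); rewrite weyl0 mul1mx pm_eq_refl. Qed.

Lemma Lrel_sym : symmetric Lrel.
Proof.
suff Lrel_sym_imp a b : Lrel a b -> Lrel b a by move=> a b; apply/idP/idP; apply: Lrel_sym_imp.
by case/LrelP=> p /pm_eq_weylV pab; apply/LrelP; exists p; rewrite pm_eq_sym.
Qed.

Lemma Lrel_trans : transitive Lrel.
Proof.
move=> b a c /LrelP[p pab] /LrelP[q qbc]; apply/LrelP; exists (addl q p).
have qpa := pm_eq_trans _ _ _ (pm_eq_mulmx (weyl q) pab) qbc.
by apply: pm_eq_trans _ _ _ _ qpa; rewrite pm_eq_sym pm_eq_weylM.
Qed.

Lemma Lrel_pm_eq {a b q} : pm_eq a (weyl q *m b) -> Lrel b a.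
Proof. by move=> ab; apply/LrelP; exists q; rewrite pm_eq_sym. Qed.

Lemma cV_neq0 {R : zmodType} {n} {a : 'cV[R]_n} : a != 0 -> exists i, a i 0 != 0.
Proof.
move=> a0; apply/existsP; apply: contraNT a0 => /existsPn a0.
by apply/eqP/matrixP => i j; rewrite (ord1 j) mxE; apply/eqP/negPn/a0.
Qed.

Lemma ProjE (a : 'cV[int]_8) i j : Proj a i j = (a i 0)%:~R * (a j 0)%:~R / (dotZ a a)%:~R.
Proof. by rewrite /Proj !mxE big_ord1 !mxE rmorph_int mulrC. Qed.

Lemma Proj_mulmxE (a b : 'cV[int]_8) i j :
  (Proj a *m Proj b) i j =
  (dotZ a b)%:~R * (a i 0)%:~R * (b j 0)%:~R / (dotZ a a)%:~R / (dotZ b b)%:~R.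
Proof.
rewrite mxE /dotZ [in RHS]rmorph_sum !mulr_suml; apply: eq_bigr => k _.
rewrite !ProjE rmorphM /=; ring.
Qed.

Lemma Proj_mul_eq0 {a b : 'cV[int]_8} :
  a != 0 -> b != 0 -> (Proj a *m Proj b == 0) = orth a b.
Proof.
move=> a0 b0; apply/eqP/idP => [/matrixP PP|/eqP ab0]; last first.
  by apply/matrixP => i j; rewrite Proj_mulmxE ab0 mxE !mul0r.
have [[i ai0] [j bj0]] := (cV_neq0 a0, cV_neq0 b0).
move: (PP i j); rewrite Proj_mulmxE mxE => /eqP.
rewrite !mulf_eq0 !invr_eq0 !intr_eq0 !dotZ_self_eq0 (negbTE a0) (negbTE b0).
by rewrite (negbTE ai0) (negbTE bj0) !orbF.
Qed.

Definition orth_char (a b : 'cV[int]_8) (p : label) : bool := orth a (weyl p *m b) (+) orth a b.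

Lemma orth_char_pm_eq {a b r s q1 q2} :
  {morph orth_char r s : p p' / addl p p' >-> p (+) p'} ->
  pm_eq a (weyl q1 *m r) -> pm_eq b (weyl q2 *m s) -> orth_char a b =1 orth_char r s.
Proof.
move=> chiD ar bs p.
have bps := pm_eq_weyl_mulmx p bs.
have orth_rs t : orth r (weyl t *m s) = orth_char r s t (+) orth r s.
  by rewrite /orth_char -addbA addbb addbF.
rewrite {1}/orth_char (orth_pm_weyl ar bps) (orth_pm_weyl ar bs) !orth_rs !chiD.
by case: (orth_char r s q1); case: (orth_char r s q2); case: (orth_char r s p); case: (orth r s).
Qed.


(** * A computable model of G_E8 *)

Definition vseq (a : 'cV[int]_8) : seq int := [seq a i 0 | i <- enum 'I_8].

Lemma nth_vseq a (i : 'I_8) : nth 0 (vseq a) i = a i 0.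
Proof. by rewrite (nth_map i) ?size_enum_ord // nth_ord_enum. Qed.

Lemma vseq_inj : injective vseq.
Proof. by move=> a b ab; apply/matrixP => i j; rewrite (ord1 j) -!nth_vseq ab. Qed.

Lemma vseqN a : vseq (- a) = map -%R (vseq a).
Proof. by rewrite -map_comp; apply: eq_map => i; rewrite mxE. Qed.

Definition dots (s t : seq int) : int := foldr (fun xy acc => xy.1 * xy.2 + acc) 0 (zip s t).
Definition orths (s t : seq int) : bool := dots s t == 0.
Definition pm_eqs (s t : seq int) : bool := (s == t) || (s == map -%R t).

Lemma orth_vseq a b : orth a b = orths (vseq a) (vseq b).
Proof.
rewrite /orth /orths /dotZ /vseq -big_enum /=; congr (_ == 0).
by elim: (enum 'I_8) => [|i r IH]; rewrite ?big_nil // big_cons IH.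
Qed.

Lemma pm_eq_vseq a b : pm_eq a b = pm_eqs (vseq a) (vseq b).
Proof. by rewrite /pm_eq /pm_eqs -vseqN !(inj_eq vseq_inj). Qed.

Definition act (p : label) (v : seq int) : seq int :=
  [seq let j := addb3 (bits i) p.1 in (-1) ^+ dotb3 p.2 j * nth 0 v (unbits j) | i <- iota 0 8].

Lemma vseq_weyl p a : vseq (weyl p *m a) = act p (vseq a).
Proof.
rewrite /act -val_enum_ord -map_comp; apply: eq_map => i /=.
by rewrite mxE weyl_row_sum (nth_vseq a (ord_of_bits _)).
Qed.

Fixpoint cube (n : nat) : seq (seq int) :=
  if n is n'.+1 then [seq c :: s | c <- [:: -1; 0; 1], s <- cube n'] else [:: [::]].

Lemma mem_cube n s : (s \in cube n) = (size s == n) && all (mem [:: -1; 0; 1]) s.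
Proof.
elim: n s => [|n IH] [|c s] //.
- by rewrite [RHS]/=; apply/negP => /allpairsP[[? ?] [_ _ ?]].
rewrite [size _]/= eqSS [all _ _]/= andbCA -IH.
apply/allpairsP/andP => [[[c' s'] [/= c'P s'P [-> ->]]] | [cP sP]]; first by [].
by exists (c, s).
Qed.

Definition rootb (s : seq int) : bool :=
  (count (fun c => c != 0) s == 2) || all (fun c => c != 0) s && (foldr *%R 1 s == 1).

Definition canonb (s : seq int) : bool :=
  all (fun k => all (fun k' => (k' < k)%N ==> (nth 0 s k' == 0)) (iota 0 8) && (nth 0 s k != 0)
                ==> (nth 0 s k == 1)) (iota 0 8).

Definition vertex_coords : seq (seq int) := [seq s <- [seq s <- cube 8 | rootb s] | canonb s].

Lemma count_enum_eq2 n (P : pred 'I_n) :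
  (count P (enum 'I_n) == 2) =
  [exists i : 'I_n, exists j : 'I_n, (i < j)%N && [forall k, P k == ((k == i) || (k == j))]].
Proof.
have -> : count P (enum 'I_n) = #|[set k | P k]|.
  by rewrite enumT cardsE cardE /enum_mem size_filter.
apply/cards2P/existsP => [[x [y [xy Pxy]]] | [i /existsP[j /andP[ij /forallP Pij]]]].
  have Pxy' k : P k = (k == x) || (k == y) by rewrite -in_set2 -Pxy inE.
  case: (ltngtP x y) => [lt_xy | lt_yx | /val_inj exy]; last by rewrite exy eqxx in xy.
    by exists x; apply/existsP; exists y; rewrite lt_xy; apply/forallP => k; rewrite Pxy'.
  by exists y; apply/existsP; exists x; rewrite lt_yx; apply/forallP => k; rewrite Pxy' orbC.
exists i, j; split; first by rewrite neq_ltn ij.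
by apply/setP => k; rewrite inE in_set2 (eqP (Pij k)).
Qed.

Lemma all_enum (T : finType) (P : pred T) : all P (enum T) = [forall x, P x].
Proof. by apply/allP/forallP => PT x => [|_]; apply: PT; rewrite ?mem_enum. Qed.

Lemma all_iota_ord n (P : pred nat) : all P (iota 0 n) = [forall i : 'I_n, P i].
Proof. by rewrite -val_enum_ord all_map all_enum. Qed.

Lemma vseq_vecZ x : vseq (vecZ x) = [seq Defs.coord (x i) | i <- enum 'I_8].
Proof. by apply: eq_map => i; rewrite mxE. Qed.

Lemma rootb_vecZ x : rootb (vseq (vecZ x)) = is_root x.
Proof.
rewrite /rootb vseq_vecZ count_map all_map all_enum count_enum_eq2.
congr (_ || (_ && (_ == 1))).
by rewrite -big_enum /=; elim: (enum 'I_8) => [|i r IH]; rewrite ?big_nil // big_cons -IH.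
Qed.

Lemma canonb_vecZ x : canonb (vseq (vecZ x)) = is_canon x.
Proof.
rewrite /canonb all_iota_ord; apply: eq_forallb => k.
rewrite all_iota_ord !nth_vseq !mxE; congr (_ && _ ==> _).
by apply: eq_forallb => k'; rewrite nth_vseq mxE.
Qed.

Lemma mem_vertex_coords (v : vertex) : vseq (vecZ (val v)) \in vertex_coords.
Proof.
case: v => x /= /andP[x_root x_canon].
rewrite !mem_filter rootb_vecZ canonb_vecZ x_root x_canon mem_cube vseq_vecZ.
rewrite size_map size_enum_ord eqxx /=.
by apply/allP => _ /mapP[i _ ->]; case: (x i) => -[|[|[|]]].
Qed.

Definition vec_of_seq (s : seq int) : vec := [ffun i : 'I_8 => inord (absz (nth 0 s i + 1))].

Lemma vseq_vec_of_seq {s} : s \in cube 8 -> vseq (vecZ (vec_of_seq s)) = s.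
Proof.
rewrite mem_cube => /andP[/eqP s8 s3].
apply: (@eq_from_nth _ 0); rewrite size_map size_enum_ord ?s8 // => i i8.
rewrite (nth_vseq _ (Ordinal i8)) mxE ffunE /Defs.coord.
have : nth 0 s i \in [:: -1; 0; 1] by apply: (allP s3); rewrite mem_nth ?s8.
by rewrite !inE => /or3P[]/eqP->; rewrite inordK.
Qed.

Lemma vertex_coordsP s : s \in vertex_coords -> exists v : vertex, vseq (vecZ (val v)) = s.
Proof.
rewrite !mem_filter => /and3P[s_canon s_root s_cube].
have s_vec := vseq_vec_of_seq s_cube.
have x_vertex : is_root (vec_of_seq s) && is_canon (vec_of_seq s).
  by rewrite -rootb_vecZ -canonb_vecZ s_vec s_root s_canon.
by exists (exist _ (vec_of_seq s) x_vertex).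
Qed.

Definition labels : seq label :=
  [seq (x, z) | x <- [seq bits n | n <- iota 0 8], z <- [seq bits n | n <- iota 0 8]].

Lemma mem_labels p : p \in labels.
Proof.
have mem_bits b : b \in [seq bits n | n <- iota 0 8].
  by apply/mapP; exists (unbits b); rewrite ?mem_iota ?unbits_lt ?unbitsK.
by case: p => x z; apply/allpairsP; exists (x, z).
Qed.

Definition dotl (h p : label) : bool := dotb3 h.1 p.1 (+) dotb3 h.2 p.2.

Definition linear_on_labels (F : label -> bool) : bool :=
  let e1 := (true, false, false) in let e2 := (false, true, false) in
  let e3 := (false, false, true) in
  let h := ((F (e1, zero3), F (e2, zero3), F (e3, zero3)),
            (F (zero3, e1), F (zero3, e2), F (zero3, e3))) in
  all (fun p => F p == dotl h p) labels.

Lemma linear_on_labelsP F : linear_on_labels F -> {morph F : p q / addl p q >-> p (+) q}.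
Proof.
move=> /allP F_lin p q; rewrite (eqP (F_lin (addl p q) (mem_labels _))).
by rewrite (eqP (F_lin p (mem_labels _))) (eqP (F_lin q (mem_labels _))) /dotl !dotb3Dr addbACA.
Qed.

Definition quad_form (e x : bits3) : bool :=
  (e.1.1 && x.1.1 && x.1.2) (+) (e.1.2 && x.1.1 && x.2) (+) (e.2 && x.1.2 && x.2).

(* One root from each of the 15 orbits of L: e_0 + e_j for 1 <= j <= 7, and the
   sign vectors ((-1)^q(i))_i for the eight quadratic forms q on F_2^3 without
   linear part. *)
Definition orbit_reps : seq (seq int) :=
  [seq [seq ((i == 0) || (i == j))%:R | i <- iota 0 8] | j <- iota 1 7] ++
  [seq [seq (-1) ^+ quad_form e (bits i) | i <- iota 0 8] | e <- [seq bits n | n <- iota 0 8]].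

(* [has] with a short-circuiting [if]: [orb] is strict under [vm_compute], so
   [has] would always scan the whole list. *)
Fixpoint hasb {T : Type} (P : T -> bool) (s : seq T) : bool :=
  if s is x :: s' then (if P x then true else hasb P s') else false.

Lemma hasbE T (P : T -> bool) s : hasb P s = has P s.
Proof. by elim: s => //= x s ->; case: (P x). Qed.

Definition reps_cover : bool :=
  let images := [seq act q r | r <- orbit_reps, q <- labels] in
  all (fun a => hasb (pm_eqs^~ a) images) vertex_coords.

Definition reps_orth_linear : bool :=
  all (fun r => all (fun s =>
    (r == s) || linear_on_labels (fun p => orths r (act p s) (+) orths r s))
    orbit_reps) orbit_reps.

Definition diameter2 : bool :=
  all (fun a => all (fun b =>
    [|| a == b, orths a b | hasb (fun c => orths a c && orths c b) vertex_coords])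
    vertex_coords) vertex_coords.

Lemma reps_size : all (fun r => size r == 8) orbit_reps.
Proof. by []. Qed.

Lemma reps_cover_ok : reps_cover.
Proof. by vm_compute. Qed.

Lemma reps_orth_linear_ok : reps_orth_linear.
Proof. by vm_compute. Qed.

Lemma diameter2_ok : diameter2.
Proof. by vm_compute. Qed.

Definition rep_vec (r : seq int) : 'cV[int]_8 := \col_i nth 0 r i.

Lemma vseq_rep_vec r : r \in orbit_reps -> vseq (rep_vec r) = r.
Proof.
move=> rR; have /eqP r8 := allP reps_size r rR.
apply: (@eq_from_nth _ 0); rewrite size_map size_enum_ord ?r8 // => i i8.
by rewrite (nth_vseq _ (Ordinal i8)) mxE.
Qed.

Lemma vertex_rep (v : vertex) :
  exists2 r, r \in orbit_reps & exists q, pm_eq (vecZ (val v)) (weyl q *m rep_vec r).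
Proof.
have := allP reps_cover_ok _ (mem_vertex_coords v).
rewrite hasbE => /hasP[_ /allpairsP[[r q] [/= rR _ ->]] qrv].
by exists r => //; exists q; rewrite pm_eq_sym pm_eq_vseq vseq_weyl vseq_rep_vec.
Qed.

Lemma orth_char_repsD {r s} : r \in orbit_reps -> s \in orbit_reps -> r != s ->
  {morph orth_char (rep_vec r) (rep_vec s) : p q / addl p q >-> p (+) q}.
Proof.
move=> rR sR rs; have := allP (allP reps_orth_linear_ok r rR) s sR.
rewrite (negbTE rs) => /linear_on_labelsP F_morph p q.
have F_orth_char p' : orth_char (rep_vec r) (rep_vec s) p' = orths r (act p' s) (+) orths r s.
  by rewrite /orth_char !orth_vseq vseq_weyl !vseq_rep_vec.
by rewrite !F_orth_char F_morph.
Qed.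

Lemma vecZ_inj : injective vecZ.
Proof.
move=> x y /matrixP xy; apply/ffunP => i; apply: val_inj.
by have := xy i 0; rewrite !mxE /Defs.coord => /addIr [].
Qed.

Lemma vertex_vseq_inj : injective (fun v : vertex => vseq (vecZ (val v))).
Proof. by move=> a b /vseq_inj/vecZ_inj/val_inj. Qed.

Lemma adj_vseq a b : adj a b = orths (vseq (vecZ (val a))) (vseq (vecZ (val b))).
Proof. exact: orth_vseq. Qed.

Lemma vertex_common_neighbour {a b : vertex} :
  a != b -> ~~ adj a b -> exists c, adj a c && adj c b.
Proof.
move=> ab not_adj; have := allP (allP diameter2_ok _ (mem_vertex_coords a)) _ (mem_vertex_coords b).
rewrite (inj_eq vertex_vseq_inj) (negbTE ab) -adj_vseq (negbTE not_adj) hasbE.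
by case/hasP=> _ /vertex_coordsP[c <-]; rewrite -!adj_vseq; exists c.
Qed.


(** * Orthogonality between two orbits *)

Lemma orth_charD {k l : vertex} : ~~ same_orbit k l ->
  {morph orth_char (vecZ (val k)) (vecZ (val l)) : p q / addl p q >-> p (+) q}.
Proof.
move=> kl; have [r rR [q1 kr]] := vertex_rep k; have [s sR [q2 ls]] := vertex_rep l.
have rs : r != s.
  apply: contraNneq kl => rs; apply: (@Lrel_trans (rep_vec r)).
    by rewrite Lrel_sym (Lrel_pm_eq kr).
  by rewrite rs (Lrel_pm_eq ls).
move=> p q; rewrite !(orth_char_pm_eq (orth_char_repsD rR sR rs) kr ls).
exact: orth_char_repsD.
Qed.

Lemma orth_weylD {k l : vertex} a b c d : ~~ same_orbit k l ->
  orth (weyl (addl a c) *m vecZ (val k)) (weyl (addl b d) *m vecZ (val l)) =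
  orth (weyl a *m vecZ (val k)) (weyl b *m vecZ (val l)) (+)
  orth (weyl c *m vecZ (val k)) (weyl d *m vecZ (val l)) (+) adj k l.
Proof.
move=> kl; set vk := vecZ (val k); set vl := vecZ (val l).
have orth_kl p q : orth (weyl p *m vk) (weyl q *m vl) = orth_char vk vl (addl p q) (+) adj k l.
  by rewrite (orth_pm_weyl (pm_eq_refl _) (pm_eq_refl _)) /orth_char -addbA addbb addbF.
rewrite !orth_kl addlACA (orth_charD kl).
by case: (orth_char vk vl (addl a b)); case: (orth_char vk vl (addl c d)); case: (adj k l).
Qed.


(** * Graph distance *)

Lemma walkb0 a b : walkb 0 a b = (a == b).
Proof.
apply/existsP/eqP => [[p]|->]; first by rewrite tuple0 /= => /eqP.
by exists [tuple]; rewrite /= eqxx.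
Qed.

Lemma walkb1 a b : walkb 1 a b = adj a b.
Proof.
apply/existsP/idP => [[p]|ab]; last by exists [tuple b]; rewrite /= ab eqxx.
by case/tupleP: p => c p; rewrite tuple0 /= andbT => /andP[ac /eqP <-].
Qed.

Lemma walkb2 {a b c} : adj a c -> adj c b -> walkb 2 a b.
Proof. by move=> ac cb; apply/existsP; exists [tuple c; b]; rewrite /= ac cb eqxx. Qed.

Lemma gdist_min {a b : vertex} {n} : (n < #|{: vertex}|)%N ->
  walkb n a b -> (forall m, (m < n)%N -> ~~ walkb m a b) -> gdist a b = n.
Proof.
move=> n_lt ab_n ab_lt; rewrite /gdist -(subnKC (ltnW n_lt)) iotaD find_cat /=.
have -> : has (fun m => walkb m a b) (iota 0 n) = false.
  by apply/hasP => -[m]; rewrite mem_iota => /ab_lt/negbTE->.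
by rewrite size_iota add0n -(subnSK n_lt) /= ab_n addn0.
Qed.

Lemma adj_irrefl (a : vertex) : ~~ adj a a.
Proof. by rewrite /adj dotZ_self_eq0 vecZ_root_neq0 //; case/andP: (valP a). Qed.

Lemma card_vertex_geq (s : seq vertex) : uniq s -> (size s <= #|{: vertex}|)%N.
Proof. by move=> s_uniq; rewrite cardT; apply: uniq_leq_size => // v; rewrite mem_enum. Qed.

Lemma gdistE (a b : vertex) : a != b -> gdist a b = if adj a b then 1%N else 2%N.
Proof.
move=> ab; case: ifPn => [adj_ab | not_adj].
  apply: gdist_min; first by apply: (@card_vertex_geq [:: a; b]); rewrite /= inE ab.
    by rewrite walkb1.
  by case=> // _; rewrite walkb0.
have [c /andP[ac cb]] := vertex_common_neighbour ab not_adj.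
have ca : c != a by apply: contraTneq ac => ->; apply: adj_irrefl.
have bc : c != b by apply: contraTneq cb => ->; apply: adj_irrefl.
apply: (gdist_min _ (walkb2 ac cb)) => [|[|[|//]] _]; rewrite ?walkb0 ?walkb1 //.
by apply: (@card_vertex_geq [:: a; b; c]); rewrite /= !inE negb_or ab eq_sym ca eq_sym bc.
Qed.

Theorem lemma3p7
  (w : vertex -> vec) (Mch : vertex -> vertex -> Lelt)
  (* w_i is a root with v_{w_i} in V_i, one choice per orbit *)
  (hw_root : forall v : vertex, is_root (w v))
  (hw_orb : forall v : vertex, Lrel (vecZ (w v)) (vecZ (val v)))
  (hw_const : forall v v' : vertex, same_orbit v v' -> w v = w v')
  (* M_{yz} y = +- z for v_y, v_z in the same orbit *)
  (hM : forall y z : vertex, same_orbit y z ->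
     (Lmx (Mch y z) *m vecZ (val y) == vecZ (val z)) ||
     (Lmx (Mch y z) *m vecZ (val y) == - vecZ (val z)))
  (k s l t : vertex)
  (hks : same_orbit k s) (hlt : same_orbit l t) (hij : ~~ same_orbit k l) :
  (gdist k l = gdist s t ->
     (uent w Mch k s *m uent w Mch l t = 0 <-> dotZ (vecZ (w k)) (vecZ (w l)) = 0)) /\
  (gdist k l <> gdist s t ->
     (uent w Mch k s *m uent w Mch l t = 0 <-> dotZ (vecZ (w k)) (vecZ (w l)) <> 0)).
Proof.
have adjE (a b : vertex) : adj a b = orth (vecZ (val a)) (vecZ (val b)) by [].
have /LrelP[pA /pm_eq_weylV wkA] := hw_orb k.
have /LrelP[pB /pm_eq_weylV wlB] := hw_orb l.
have sM : pm_eq (vecZ (val s)) (weyl (plabel (Mch k s)) *m vecZ (val k)).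
  by rewrite pm_eq_sym -Lmx_weyl; apply: hM.
have tN : pm_eq (vecZ (val t)) (weyl (plabel (Mch l t)) *m vecZ (val l)).
  by rewrite pm_eq_sym -Lmx_weyl; apply: hM.
have U : (uent w Mch k s *m uent w Mch l t == 0) =
         (dotZ (vecZ (w k)) (vecZ (w l)) == 0) (+) (adj s t (+) adj k l).
  rewrite Proj_mul_eq0 ?Lmx_weyl ?weyl_mulmx_eq0 ?vecZ_root_neq0 //.
  rewrite (orth_pm_eql _ (pm_eq_weyl_mulmx _ wkA)) (orth_pm_eqr _ (pm_eq_weyl_mulmx _ wlB)).
  rewrite orth_weylD // -(orth_pm_eql _ sM) -(orth_pm_eqr _ tN).
  by rewrite -(orth_pm_eql _ wkA) -(orth_pm_eqr _ wlB) !adjE -addbA addbCA.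
have kl : k != l by apply: contraNneq hij => ->; apply: Lrel_refl.
have st : s != t.
  apply: contraNneq hij => st; apply: (@Lrel_trans (vecZ (val s))) => //.
  by rewrite st Lrel_sym.
have gd : (gdist k l == gdist s t) = (adj k l == adj s t).
  by rewrite !gdistE //; case: (adj k l); case: (adj s t).
split=> /eqP; rewrite gd; case: (adj k l) U; case: (adj s t) => //= U _;
  rewrite ?addbF ?addbT in U; split=> [/eqP | /eqP D0].
all: try by rewrite U => /eqP.
all: by apply/eqP; rewrite U D0.
Qed.
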